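(* Let $(A,f)$ be a finite-dimensional quadratic Lie algebra over a field $\mathbb{K}$ of characteristic zero, let $d$ be an $f$-skew-symmetric derivation of $A$, and let $(A_b,f_b)$ be the one-dimensional double extension of $(A,f)$ by $(b,d)$. Then $A_b$ is reduced if and only if $d$ is not an inner derivation of $A$, $A_b^2=(\mathrm{im}\,d+A^2)\oplus\mathbb{K}\beta$, and $Z(A)\cap\ker d\subseteq \mathrm{im}\,d+A^2$.
   Context: A quadratic Lie algebra $(A,f)$ is a Lie algebra with a non-degenerate symmetric bilinear form $f$ satisfying $f([x,y],z)+f(y,[x,z])=0$. A derivation $d$ is $f$-skew-symmetric if $f(d(x),y)+f(x,d(y))=0$ for all $x,y$. The one-dimensional double extension of $(A,f)$ by $(b,d)$ is the vector space $A_b=\mathbb{K}b\oplus A\oplus\mathbb{K}\beta$ with bracket $[\lambda b+a+\mu\beta,\lambda' b+a'+\mu'\beta]=\lambda d(a')-\lambda' d(a)+[a,a']_A+f(d(a),a')\beta$ and symmetric form $f_b(\lambda b+a+\mu\beta,\lambda' b+a'+\mu'\beta)=\lambda\mu'+\lambda'\mu+f(a,a')$. A Lie algebra $L$ is reduced if $Z(L)\subseteq L^2=[L,L]$. *)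

From HB Require Import structures.
From mathcomp Require Import all_boot all_order all_algebra.
Set Implicit Arguments. Unset Strict Implicit. Unset Printing Implicit Defensive.
Import GRing.Theory.
Local Open Scope ring_scope.

Section Defs.
Variable K : fieldType.

Section Generic.
Variable T : zmodType.
Variable br : T -> T -> T.

Definition in_center (x : T) : Prop := forall y, br x y = 0.

(* derived algebra L^2 = [L,L]: finite sums of brackets (scalars are absorbed
   by bilinearity, so this is the linear span of all brackets) *)
Definition in_derived (x : T) : Prop :=
  exists s : seq (T * T), x = \sum_(p <- s) br p.1 p.2.

Definition is_reduced : Prop := forall x, in_center x -> in_derived x.
End Generic.

Variable V : vectType K.

Definition bilinear_br (br : V -> V -> V) : Prop :=
  (forall a x y z, br (a *: x + y) z = a *: br x z + br y z) /\
  (forall a x y z, br z (a *: x + y) = a *: br z x + br z y).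

Definition is_lie (br : V -> V -> V) : Prop :=
  [/\ bilinear_br br,
      (forall x, br x x = 0) &
      (forall x y z, br x (br y z) + br y (br z x) + br z (br x y) = 0)].

Definition is_quadratic_form (br : V -> V -> V) (f : V -> V -> K) : Prop :=
  [/\ (forall a x y z, f (a *: x + y) z = a * f x z + f y z),
      (forall x y, f x y = f y x),
      (forall x, (forall y, f x y = 0) -> x = 0) &
      (forall x y z, f (br x y) z + f y (br x z) = 0)].

Definition quadratic_lie (br : V -> V -> V) (f : V -> V -> K) : Prop :=
  is_lie br /\ is_quadratic_form br f.

Definition is_derivation (br : V -> V -> V) (d : V -> V) : Prop :=
  (forall a x y, d (a *: x + y) = a *: d x + d y) /\
  (forall x y, d (br x y) = br (d x) y + br x (d y)).

Definition f_skew_symmetric (f : V -> V -> K) (d : V -> V) : Prop :=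
  forall x y, f (d x) y + f x (d y) = 0.

Definition inner_derivation (br : V -> V -> V) (d : V -> V) : Prop :=
  exists a, forall x, d x = br a x.

Definition in_imd_plus_derived (br : V -> V -> V) (d : V -> V) (x : V) : Prop :=
  exists u w, in_derived br w /\ x = d u + w.

(* The one-dimensional double extension A_b = K b (+) A (+) K beta,
   an element lambda b + a + mu beta is represented by ((lambda, a), mu). *)
Definition dext_br (br : V -> V -> V) (f : V -> V -> K) (d : V -> V)
  (z w : (K * V * K)%type) : (K * V * K)%type :=
  let: (l, a, _) := z in let: (l', a', _) := w in
  (0, l *: d a' - l' *: d a + br a a', f (d a) a').

Definition dext_form (f : V -> V -> K) (z w : (K * V * K)%type) : K :=
  let: (l, a, m) := z in let: (l', a', m') := w in
  l * m' + l' * m + f a a'.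

End Defs.

(* Write z = l b + a + m beta.  Then
   [z, l' b + a' + m' beta] = (l d a' - l' d a + [a, a']) + f (d a, a') beta,
   so by nondegeneracy of f, z is central iff d a = 0 and l d + ad a = 0.
   Thus beta is always central, a central z with l <> 0 exhibits
   d = ad (- a / l) as inner, and for l = 0 the central elements are
   (Z(A) cap ker d) + K beta.  Brackets all lie in (im d + A^2) + K beta, and
   conversely [b, u] = d u and [a, a'] = [a, a']_A + f (d a, a') beta give
   everything up to multiples of beta, which are brackets as soon as beta is. *)

From HB Require Import structures.
From mathcomp Require Import all_boot all_order all_algebra.
Local Open Scope ring_scope.
Import GRing.Theory.

Lemma add_pairE (U W : nmodType) (u u' : U) (w w' : W) :
  (u, w) + (u', w') = (u + u', w + w').
Proof. by []. Qed.

Section Derived.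
Context {T : zmodType} {br : T -> T -> T}.

Lemma in_derived0 : in_derived br 0.
Proof. by exists [::]; rewrite big_nil. Qed.

Lemma in_derivedD x y :
  in_derived br x -> in_derived br y -> in_derived br (x + y).
Proof. by move=> [s ->] [t ->]; exists (s ++ t); rewrite big_cat. Qed.

Lemma in_derived_br x y : in_derived br (br x y).
Proof. by exists [:: (x, y)]; rewrite big_seq1. Qed.

Lemma in_derived_ind (P : T -> Prop) :
  P 0 -> (forall x y, P x -> P y -> P (x + y)) -> (forall x y, P (br x y)) ->
  forall z, in_derived br z -> P z.
Proof.
move=> P0 PD Pbr _ [s ->]; elim: s => [|p s IHs]; first by rewrite big_nil.
by rewrite big_cons; apply: PD.
Qed.

End Derived.

Section DoubleExtension.
Variables (K : fieldType) (V : vectType K).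
Variables (br : V -> V -> V) (f : V -> V -> K) (d : V -> V).
Hypothesis br_bilinear : bilinear_for *:%R *:%R br.
Hypothesis br_alternating : forall x, br x x = 0.
Hypothesis f_linearl : forall y, scalar (f^~ y).
Hypothesis f_nondegenerate : forall x, (forall y, f x y = 0) -> x = 0.
Hypothesis d_linear : linear d.

HB.instance Definition _ := bilinear_isBilinear.Build K V V V *:%R *:%R br br_bilinear.
HB.instance Definition _ := GRing.isLinear.Build K V V *:%R d d_linear.

Local Notation D := (dext_br br f d).

Lemma f0l y : f 0 y = 0.
Proof.
by rewrite -(subrr (0 : V)) (GRing.zmod_morphism_linear (f_linearl y)) subrr.
Qed.

Lemma in_imd_plus_derivedD x y :
  in_imd_plus_derived br d x -> in_imd_plus_derived br d y ->
  in_imd_plus_derived br d (x + y).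
Proof.
move=> [u [w [Hw ->]]] [u' [w' [Hw' ->]]]; exists (u + u'), (w + w'); split.
  exact: in_derivedD.
by rewrite linearD addrACA.
Qed.

Lemma dext_derived_subset z :
  in_derived D z -> z.1.1 = 0 /\ in_imd_plus_derived br d z.1.2.
Proof.
move: z; apply: in_derived_ind.
- split=> //; exists 0, 0; split; first exact: in_derived0.
  by rewrite linear0 addr0.
- move=> [[l x] m] [[l' x'] m'] /= [-> Hx] [-> Hx']; split; first exact: addr0.
  exact: in_imd_plus_derivedD.
- move=> [[l a] m] [[l' a'] m'] /=; split=> //.
  exists (l *: a' - l' *: a), (br a a'); split; first exact: in_derived_br.
  by rewrite linearB !linearZ.
Qed.

Lemma dext_derived_imd u : in_derived D (0, d u, 0).
Proof.
have -> : (0, d u, 0) = D (1, 0, 0) (0, u, 0).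
  by rewrite /= linear0 f0l scale1r scale0r subr0 linear0l addr0.
exact: in_derived_br.
Qed.

Lemma dext_derived_lift w : in_derived br w -> exists m, in_derived D (0, w, m).
Proof.
move: w; apply: in_derived_ind.
- by exists 0; exact: in_derived0.
- move=> x y [m Hx] [m' Hy]; exists (m + m').
  by have := in_derivedD _ _ Hx Hy; rewrite !add_pairE addr0.
- move=> x y; exists (f (d x) y).
  have -> : (0, br x y, f (d x) y) = D (0, x, 0) (0, y, 0).
    by rewrite /= !scale0r subrr add0r.
  exact: in_derived_br.
Qed.

Lemma dext_derived_superset :
  (forall m, in_derived D (0, 0, m)) ->
  forall x m, in_imd_plus_derived br d x -> in_derived D (0, x, m).
Proof.
move=> Dbeta x m [u [w [Hw ->]]]; have [m' Hm'] := dext_derived_lift _ Hw.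
have -> : (0, d u + w, m) = (0, d u, 0) + (0, w, m') + (0, 0, m - m') :> K * V * K.
  by rewrite !add_pairE !addr0 add0r addrC subrK.
by apply: in_derivedD; first apply: in_derivedD; [exact: dext_derived_imd | |].
Qed.

Lemma dext_centerE l a m :
  in_center D (l, a, m) <-> d a = 0 /\ forall y, l *: d y + br a y = 0.
Proof.
split=> [Da | [da0 Hl] [[l' a'] m']].
  split=> [|y].
    by apply: f_nondegenerate => y; have /(congr1 snd) := Da (0, y, 0).
  by have /(congr1 (fun z => z.1.2)) /= := Da (0, y, 0); rewrite scale0r subr0.
by rewrite /= da0 f0l scaler0 subr0 Hl.
Qed.

Lemma dext_center_beta m : in_center D (0, 0, m).
Proof.
by apply/dext_centerE; rewrite linear0; split=> // y; rewrite scale0r linear0l addr0.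
Qed.

Lemma dext_center_ad c : (forall x, d x = br c x) -> in_center D (1, - c, 0).
Proof.
move=> dE; apply/dext_centerE; split=> [|y].
  by rewrite dE linearNr /= br_alternating oppr0.
by rewrite scale1r dE linearNl subrr.
Qed.

Lemma dext_center_ker x : in_center br x -> d x = 0 -> in_center D (0, x, 0).
Proof. by move=> Zx dx0; apply/dext_centerE; split=> // y; rewrite scale0r add0r. Qed.

Lemma dext_center_outer l a m :
  ~ inner_derivation br d -> in_center D (l, a, m) ->
  [/\ l = 0, in_center br a & d a = 0].
Proof.
move=> outer /dext_centerE [da0 Hl].
have l0 : l = 0.
  case: (eqVneq l 0) => // l_neq0; case: outer; exists (- l^-1 *: a) => y.
  move/eqP: (Hl y); rewrite addrC addr_eq0 => /eqP baE.
  by rewrite linearZl /= baE scaleNr scalerN opprK scalerA mulVf // scale1r.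
by split=> // y; have := Hl y; rewrite l0 scale0r add0r.
Qed.

Lemma dext_reducedP :
  is_reduced D <->
  [/\ ~ inner_derivation br d,
      (forall z, in_derived D z <-> z.1.1 = 0 /\ in_imd_plus_derived br d z.1.2) &
      (forall x, in_center br x -> d x = 0 -> in_imd_plus_derived br d x)].
Proof.
split=> [red | [outer derivedE ker_sub] [[l a] m]].
  have Dbeta m : in_derived D (0, 0, m) by apply/red/dext_center_beta.
  split.
  - by case=> c /dext_center_ad /red /dext_derived_subset [/eqP]; rewrite oner_eq0.
  - case=> [[l x] m]; split; first exact: dext_derived_subset.
    by case=> /= -> /(dext_derived_superset Dbeta x m).
  - move=> x Zx dx0; have /red Dx := dext_center_ker _ Zx dx0.
    by case: (dext_derived_subset _ Dx).
case/(dext_center_outer _ _ _ outer) => -> Za da0.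
by apply/derivedE; split=> //; exact: ker_sub.
Qed.

End DoubleExtension.

Theorem corollary2p9 (K : fieldType) (V : vectType K)
  (br : V -> V -> V) (f : V -> V -> K) (d : V -> V) :
  [pchar K] =i pred0 ->
  quadratic_lie br f ->
  is_derivation br d ->
  f_skew_symmetric f d ->
  is_reduced (dext_br br f d) <->
  [/\ ~ inner_derivation br d,
      (forall z : (K * V * K)%type,
         in_derived (dext_br br f d) z <->
         (z.1.1 = 0 /\ in_imd_plus_derived br d z.1.2)) &
      (forall x : V, in_center br x -> d x = 0 -> in_imd_plus_derived br d x)].
Proof.
move=> _ [[[brl brr] br_alt _] [fl _ f_nondeg _]] [d_lin _] _.
have br_bilin : bilinear_for *:%R *:%R br.
  by split=> y a x z; [exact: brl | exact: brr].
have f_linl y : scalar (f^~ y) by move=> a x z; exact: fl.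
exact: dext_reducedP.
Qed.
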